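(* Let $n\ge 2$ and let $\Omega$ be a compact subset of $\mathbb{R}^n$. Then $\mathit{Uf}(\mathrm{conv}(\Omega))\subset \mathit{Uf}(\Omega)$, i.e. the minimal unfolded region of the convex hull of $\Omega$ is included in the minimal unfolded region of $\Omega$.
   Context: $\mathrm{conv}(\Omega)$ is the convex hull of $\Omega$; $S^{n-1}$ is the unit sphere in $\mathbb{R}^n$. For $X\subset\mathbb{R}^n$, $v\in S^{n-1}$ and $b\in\mathbb{R}$, put $X^+_{v,b}=X\cap\{x\in\mathbb{R}^n : x\cdot v>b\}$, and let $\mathrm{R}_{v,b}$ be the reflection of $\mathbb{R}^n$ in the hyperplane $\{x : x\cdot v=b\}$. For a bounded $X\subset\mathbb{R}^n$, define $l_X(v)=\inf\{a : \mathrm{R}_{v,c}(X^+_{v,c})\subset X \text{ for every } c\ge a\}$ and the minimal unfolded region $\mathit{Uf}(X)=\bigcap_{v\in S^{n-1}}\{x\in\mathbb{R}^n : x\cdot v\le l_X(v)\}$. *)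

From HB Require Import structures.
From mathcomp Require Import all_boot all_order all_algebra.
From mathcomp Require Import all_classical all_reals all_analysis.
Set Implicit Arguments. Unset Strict Implicit. Unset Printing Implicit Defensive.
Import Order.TTheory GRing.Theory Num.Theory.
Import numFieldNormedType.Exports.
Local Open Scope classical_set_scope.
Local Open Scope ring_scope.

Section Defs.
Variables (R : realType) (n : nat).
Notation V := 'rV[R]_n.

Definition dotv (x v : V) : R := \sum_(i < n) x ord0 i * v ord0 i.

Definition sphere : set V := [set v | dotv v v = 1].

Definition halfplus (X : set V) (v : V) (b : R) : set V :=
  X `&` [set x | b < dotv x v].

(* reflection in the hyperplane {x . v = b} (v a unit vector) *)
Definition refl (v : V) (b : R) (x : V) : V :=
  x - (2 * (dotv x v - b)) *: v.

Definition lX (X : set V) (v : V) : \bar R :=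
  ereal_inf [set a%:E | a in
     [set a : R | forall c : R, a <= c -> refl v c @` halfplus X v c `<=` X]].

Definition Uf (X : set V) : set V :=
  [set x | forall v, sphere v -> ((dotv x v)%:E <= lX X v)%E].

Definition chull (Om : set V) : set V :=
  [set x | exists k : nat, exists p : 'I_k -> V, exists w : 'I_k -> R,
     [/\ (forall i, Om (p i)), (forall i, 0 <= w i),
         \sum_(i < k) w i = 1 & x = \sum_(i < k) w i *: p i]].

End Defs.

From mathcomp Require Import all_boot all_order all_algebra all_classical all_reals all_analysis.
Import numFieldNormedType.Exports.
Import Order.TTheory GRing.Theory Num.Theory.
Local Open Scope classical_set_scope.
Local Open Scope ring_scope.

(* Fix a hyperplane [x . v = c] such that the reflection maps the part of Om
   above it into Om.  Folding every point of Om onto the lower side then keeps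
   it in Om, so for a convex combination y of points of Om lying above the
   hyperplane, the same combination z of the folded points lies in conv(Om).
   Folding moves points only along -v, and in total at least as far as
   reflecting y would, so the reflection of y lies on the segment [y, z], hence
   in conv(Om).  Thus every admissible reflection level for Om is one for
   conv(Om), so l_conv(Om) <= l_Om pointwise. *)

Section ReflectionConvexHull.
Variables (R : realType) (n : nat).
Notation V := 'rV[R]_n.

Lemma dotvD (x y v : V) : dotv (x + y) v = dotv x v + dotv y v.
Proof. by rewrite /dotv -big_split; apply: eq_bigr => i _; rewrite mxE mulrDl. Qed.

Lemma dotvZ a (x v : V) : dotv (a *: x) v = a * dotv x v.
Proof. by rewrite /dotv mulr_sumr; apply: eq_bigr => i _; rewrite mxE mulrA. Qed.

Lemma dotv_sum k (w : 'I_k -> R) (p : 'I_k -> V) v :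
  dotv (\sum_(i < k) w i *: p i) v = \sum_(i < k) w i * dotv (p i) v.
Proof.
elim: k w p => [|k IH] w p; last by rewrite !big_ord_recr /= dotvD dotvZ IH.
by rewrite !big_ord0 -(scale0r (0 : V)) dotvZ mul0r.
Qed.

Lemma chull_segment (Om : set V) x1 x2 (l : R) : 0 <= l -> l <= 1 ->
  chull Om x1 -> chull Om x2 -> chull Om ((1 - l) *: x1 + l *: x2).
Proof.
move=> l0 l1 [k1 [p1 [w1 [Hp1 Hw1 Hs1 ->]]]] [k2 [p2 [w2 [Hp2 Hw2 Hs2 ->]]]].
have split_l (a : 'I_k1) : fintype.split (lshift k2 a) = inl a.
  exact: (unsplitK (inl a)).
have split_r (b : 'I_k2) : fintype.split (rshift k1 b) = inr b.
  exact: (unsplitK (inr b)).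
exists (k1 + k2)%N.
exists (fun i => if fintype.split i is inl a then p1 a else
                 if fintype.split i is inr b then p2 b else 0).
exists (fun i => if fintype.split i is inl a then (1 - l) * w1 a else
                 if fintype.split i is inr b then l * w2 b else 0).
split.
- by move=> i; case: (fintype.split i).
- by move=> i; case: (fintype.split i) => a; rewrite mulr_ge0 // subr_ge0.
- rewrite big_split_ord /=.
  under eq_bigr do rewrite split_l.
  under [X in _ + X = _]eq_bigr do rewrite split_r.
  by rewrite -!mulr_sumr Hs1 Hs2 !mulr1 subrK.
- rewrite big_split_ord /=.
  under [in RHS]eq_bigr do rewrite split_l.
  under [X in _ = _ + X]eq_bigr do rewrite split_r.
  by rewrite !scaler_sumr; congr (_ + _); apply: eq_bigr => i _; rewrite scalerA.
Qed.

Definition fold (v : V) (c : R) (x : V) : V :=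
  x - (2 * Num.max 0 (dotv x v - c)) *: v.

Lemma fold_refl_stable (Om : set V) v c x :
  refl v c @` halfplus Om v c `<=` Om -> Om x -> Om (fold v c x).
Proof.
move=> stable Omx; rewrite /fold.
have [_ | above] := leP (dotv x v - c) 0.
  by rewrite mulr0 scale0r subr0.
apply: stable; exists x => //.
by split=> //=; rewrite -subr_gt0.
Qed.

(* The reflection moves [y] by twice its height [S] along [-v]: the fraction
   [S / T] of the way to [y - 2 T v]. *)
Lemma refl_on_segment v c (y : V) (T : R) :
  0 < dotv y v - c <= T ->
  exists2 l, 0 <= l <= 1 &
    refl v c y = (1 - l) *: y + l *: (y - (2 * T) *: v).
Proof.
set S := dotv y v - c => /andP[S_gt0 S_le_T].
have T_gt0 : 0 < T := lt_le_trans S_gt0 S_le_T.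
exists (S / T).
  by rewrite divr_ge0 ?(ltW S_gt0) ?(ltW T_gt0) //= ler_pdivrMr // mul1r.
rewrite /refl -/S scalerBr scalerA scalerBl scale1r addrA subrK.
by rewrite mulrCA -mulrA mulVf ?mulr1 ?gt_eqF.
Qed.

Lemma chull_refl_stable (Om : set V) v c :
  refl v c @` halfplus Om v c `<=` Om ->
  refl v c @` halfplus (chull Om) v c `<=` chull Om.
Proof.
move=> stable _ [y [hull_y y_above] <-].
have [k [p [w [Om_p w_ge0 w_sum1 def_y]]]] := hull_y.
pose h i := Num.max 0 (dotv (p i) v - c).
pose T := \sum_(i < k) w i * h i.
have hull_z : chull Om (\sum_(i < k) w i *: fold v c (p i)).
  by exists k, (fun i => fold v c (p i)), w; split=> // i; apply: fold_refl_stable.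
have def_z : \sum_(i < k) w i *: fold v c (p i) = y - (2 * T) *: v.
  rewrite def_y /fold /T.
  under eq_bigr do rewrite scalerBr scalerA.
  rewrite sumrB -scaler_suml mulr_sumr; congr (_ - _ *: _).
  by apply: eq_bigr => i _; rewrite mulrCA.
have height_y : dotv y v - c = \sum_(i < k) w i * (dotv (p i) v - c).
  rewrite def_y dotv_sum.
  by under [RHS]eq_bigr do rewrite mulrBr; rewrite sumrB -mulr_suml w_sum1 mul1r.
have height_le_T : dotv y v - c <= T.
  by rewrite height_y ler_sum // => i _; rewrite ler_wpM2l // le_max lexx orbT.
have [|l l01 ->] := refl_on_segment v c y T; first by rewrite subr_gt0 y_above.
by case/andP: l01 => l0 l1; apply: chull_segment => //; rewrite -def_z.
Qed.

Lemma lX_le (X Y : set V) v :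
  (forall c, refl v c @` halfplus X v c `<=` X ->
             refl v c @` halfplus Y v c `<=` Y) ->
  (lX Y v <= lX X v)%E.
Proof.
move=> XY; apply: le_ereal_inf => _ [a Xa <-].
by exists a => // c ac; apply/XY/Xa.
Qed.

Lemma Uf_subset (X Y : set V) :
  (forall v c, refl v c @` halfplus X v c `<=` X ->
               refl v c @` halfplus Y v c `<=` Y) ->
  Uf Y `<=` Uf X.
Proof.
move=> XY x Ufx v v_unit; apply: (le_trans (Ufx v v_unit)).
by apply: lX_le => c; exact: XY.
Qed.

End ReflectionConvexHull.

Theorem theorem2p4 (R : realType) (n : nat) (Om : set 'rV[R]_n) :
  (2 <= n)%N -> compact Om -> (Uf (chull Om) `<=` Uf Om)%classic.
Proof. by move=> _ _; apply: Uf_subset => v c; exact: chull_refl_stable. Qed.
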